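(* Let $n\ge1$, let $\Omega$ be the set of all Borel probability measures on $[0,1]$, let $D(x_0,\dots,x_n;p)=\sum_{k=0}^n\binom{n}{k}p^k(1-p)^{n-k}|p-x_k|$, and for $\sigma_0,\dots,\sigma_n,\mu\in\Omega$ put $E(\sigma_0,\dots,\sigma_n;\mu)=\int\cdots\int D(x_0,\dots,x_n;p)\,d\sigma_0(x_0)\cdots d\sigma_n(x_n)\,d\mu(p)$. Then $$\min_{\sigma_0,\dots,\sigma_n\in\Omega}\max_{\mu\in\Omega}E(\sigma_0,\dots,\sigma_n;\mu)=\min_{a_0,\dots,a_n\in[0,1]}\max_{p\in[0,1]}D(a_0,\dots,a_n;p)=\min_{a_0,\dots,a_n\in[0,1]}\|D(a_0,\dots,a_n;\cdot)\|_\infty.$$ *)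

From HB Require Import structures.
From mathcomp Require Import all_boot all_order all_algebra.
From mathcomp Require Import all_classical all_reals all_analysis.
Set Implicit Arguments. Unset Strict Implicit. Unset Printing Implicit Defensive.
Import Order.TTheory GRing.Theory Num.Theory.
Local Open Scope classical_set_scope.
Local Open Scope ring_scope.

Section Defs.
Variable R : realType.

(* Omega: Borel probability measures on [0,1], represented as Borel
   probability measures on R concentrated on [0,1]. *)
Definition inOmega (P : probability R R) : Prop := P `[0%R, 1%R]%classic = 1%E.

(* D(x_0,...,x_n; p); only the coordinates x 0, ..., x n are used. *)
Definition Dfun (n : nat) (x : nat -> R) (p : R) : R :=
  \sum_(k < n.+1) ('C(n, k))%:R * p ^+ k * (1 - p) ^+ (n - k) * `|p - x k|.

Definition upd (x : nat -> R) (k : nat) (y : R) : nat -> R :=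
  fun i => if i == k then y else x i.

(* iterint s k F x = \int ... \int F(x[0:=y_0,...,k-1:=y_{k-1}])
     ds_0(y_0) ... ds_{k-1}(y_{k-1})   (s_0 innermost) *)
Fixpoint iterint (s : nat -> probability R R) (k : nat)
  (F : (nat -> R) -> \bar R) (x : nat -> R) : \bar R :=
  match k with
  | 0 => F x
  | k'.+1 => (\int[s k']_y iterint s k' F (upd x k' y))%E
  end.

Definition Efun (n : nat) (s : nat -> probability R R) (mu : probability R R)
  : \bar R :=
  (\int[mu]_p iterint s n.+1 (fun x => (Dfun n x p)%:E) (fun _ => 0%R))%E.

Definition adm_meas (n : nat) (s : nat -> probability R R) : Prop :=
  forall k, (k <= n)%N -> inOmega (s k).

Definition adm_pt (n : nat) (a : nat -> R) : Prop :=
  forall k, (k <= n)%N -> a k \in `[0%R, 1%R].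

Definition worstE (n : nat) (s : nat -> probability R R) : \bar R :=
  ereal_sup [set Efun n s mu | mu in inOmega].

Definition worstD (n : nat) (a : nat -> R) : \bar R :=
  ereal_sup [set (Dfun n a p)%:E | p in `[0%R, 1%R]%classic].

Definition supnormD (n : nat) (a : nat -> R) : \bar R :=
  ereal_sup [set (`|Dfun n a p|)%:E | p in `[0%R, 1%R]%classic].

End Defs.

(* Integrating out x_0, ..., x_n turns E(s; mu) into the integral against mu
   of g_s(p) = sum_k B_{n,k}(p) phi_k(p), where B_{n,k} are the Bernstein
   polynomials and phi_k(p) = int |p - y| ds_k(y) (here [Eprofile n s] and
   [mean_dist (s k)]).  As g_s is continuous, the supremum over mu is attained
   at a Dirac mass, and for Dirac strategies s_k = delta_{a_k} one gets
   g_s = D(a; .).  Conversely, by the triangle inequality the intervals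
   [p - phi_k(p), p + phi_k(p)], p in [0,1], pairwise meet, so (Helly's theorem
   on the line) they share a point m_k in [0,1]; then D(m; .) <= g_s on [0,1],
   whence max_p D(m; p) <= max_mu E(s; mu).  So both min-max values equal
   min_a max_p D(a; p), which is attained because a |-> max_p D(a; p) is
   1-Lipschitz for the l^1 distance.  Finally |D| = D since D >= 0 on [0,1]. *)

From HB Require Import structures.
From mathcomp Require Import all_boot all_order all_algebra.
From mathcomp Require Import all_classical all_reals all_analysis.
From mathcomp Require Import measurable_realfun ring lra.
Import Order.TTheory GRing.Theory Num.Theory.
Import numFieldNormedType.Exports.
Local Open Scope classical_set_scope.
Local Open Scope ring_scope.

Set Implicit Arguments. Unset Strict Implicit. Unset Printing Implicit Defensive.

Lemma lipschitz1_continuous (K : numFieldType) (V W : normedModType K)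
    (f : V -> W) :
  (forall x y, `|f x - f y| <= `|x - y|) -> continuous f.
Proof.
move=> f_lip x; apply/cvgrPdist_le => e e0; near=> y.
apply: le_trans (f_lip x y) _; near: y.
apply/nbhs_normP; exists e => //= z; rewrite /ball_ /= => h; exact: ltW.
Unshelve. all: by end_near.
Qed.

Section ereal_extrema.
Variable R : realType.
Implicit Types (S : set (\bar R)) (x : \bar R).

Lemma ereal_sup_attained S x : S x -> ubound S x -> ereal_sup S = x.
Proof.
move=> Sx ub; apply/eqP; rewrite eq_le ge_ereal_sup //=.
exact: ereal_sup_ubound.
Qed.

Lemma ereal_inf_attained S x : S x -> lbound S x -> ereal_inf S = x.
Proof.
move=> Sx lb; apply/eqP; rewrite eq_le ereal_inf_lbound //=.
exact: le_ereal_inf_tmp.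
Qed.

End ereal_extrema.

Section real_lemmas.
Variable R : realType.

Lemma l1_lipschitz_EVT_min m (F : (nat -> R) -> R) :
    (forall a b, F a - F b <= \sum_(k < m) `|a k - b k|) ->
  exists a, (forall k, (k < m)%N -> a k \in `[0, 1]) /\
    (forall b, (forall k, (k < m)%N -> b k \in `[0, 1]) -> F a <= F b).
Proof.
elim: m F => [|m IH] F F_lip.
  exists (fun _ => 0); split => // b _.
  by rewrite -subr_le0; apply: le_trans (F_lip _ _) _; rewrite big_ord0.
have upd_lip t a b :
    F (upd a m t) - F (upd b m t) <= \sum_(k < m) `|a k - b k|.
  apply: le_trans (F_lip _ _) _.
  rewrite big_ord_recr /= /upd eqxx subrr normr0 addr0.
  by under eq_bigr => i _ do rewrite ltn_eqF ?ltn_ord //; exact: lexx.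
(* Minimising over the first m coordinates for each fixed last coordinate t
   leaves a 1-Lipschitz function h of t, which attains its minimum on [0, 1]. *)
have /choice[A A_min] := fun t => IH _ (upd_lip t).
pose h t := F (upd (A t) m t).
have h_lip t t' : h t - h t' <= `|t - t'|.
  have [_ At_min] := A_min t.
  apply: (@le_trans _ _ (F (upd (A t') m t) - h t')).
    by rewrite lerD2r; apply: At_min; case: (A_min t').
  apply: le_trans (F_lip _ _) _; rewrite big_ord_recr /= /upd eqxx.
  by rewrite big1 ?add0r // => i _; rewrite ltn_eqF ?ltn_ord ?subrr ?normr0.
have h_cont : continuous h.
  apply: lipschitz1_continuous => x y.
  by rewrite ler_norml h_lip andbT lerNl opprB distrC h_lip.
have [t t01 ht_min] := EVT_min ler01 (continuous_subspaceT h_cont).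
exists (upd (A t) m t); split.
  move=> k; rewrite ltnS leq_eqVlt => /orP[/eqP ->|km]; first by rewrite /upd eqxx.
  by rewrite /upd ifN ?neq_ltn ?km //; case: (A_min t) => + _; exact.
move=> b b01.
have -> : F b = F (upd b m (b m)).
  by congr F; apply: funext => i; rewrite /upd; case: eqP => // ->.
apply: (@le_trans _ _ (h (b m))); first exact/ht_min/b01.
have [_ Abm_min] := A_min (b m).
by rewrite /h; apply: Abm_min => k km; apply: b01; exact: ltnW.
Qed.

Lemma pairwise_meeting_itv01 (r : R -> R) :
    (forall p, p \in `[0, 1] -> 0 <= r p) ->
    (forall p q, p \in `[0, 1] -> q \in `[0, 1] -> p - q <= r p + r q) ->
  exists2 m, m \in `[0, 1] & forall p, p \in `[0, 1] -> `|p - m| <= r p.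
Proof.
(* The supremum of the left ends [p - r p], clipped at 0, lies in every
   interval [p - r p, p + r p]. *)
move=> r_ge0 r_meet.
pose E := [set p - r p | p in `[0%R, 1%R]%classic].
have E_ub : ubound E 1.
  move=> _ [p p01 <-]; have {}p01 : p \in `[0, 1] := p01.
  have := r_ge0 p p01.
  by move: p01; rewrite in_itv /= => /andP[_ p1]; lra.
have E_sup : has_sup E.
  have zero01 : (0 : R) \in `[0, 1] by rewrite in_itv /= lexx ler01.
  by split; [exists (0 - r 0), 0 | exists 1].
exists (Num.max 0 (sup E)).
  by rewrite in_itv /= le_max lexx /= ge_max ler01 ge_sup //; case: E_sup.
move=> p p01; rewrite ler_norml; apply/andP; split.
  rewrite lerNl opprB lerBlDl ge_max; apply/andP; split.
    by have := r_ge0 p p01; move: p01; rewrite in_itv /= => /andP[p0 _]; lra.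
  apply: ge_sup => //; first by case: E_sup.
  move=> _ [q q01 <-]; have {}q01 : q \in `[0, 1] := q01.
  by have := r_meet q p q01 p01; lra.
have : p - r p <= sup E by apply: sup_upper_bound => //; exists p.
by have := le_max (sup E) 0 (sup E); rewrite lexx orbT; lra.
Qed.

End real_lemmas.

Section bernstein.
Variable R : realType.
Implicit Types (n : nat) (p : R).

Definition bernstein n k p : R := 'C(n, k)%:R * p ^+ k * (1 - p) ^+ (n - k).

Lemma bernstein_ge0 n k p : p \in `[0, 1] -> 0 <= bernstein n k p.
Proof.
by rewrite in_itv /= => /andP[p0 p1]; rewrite !mulr_ge0 ?exprn_ge0 ?subr_ge0.
Qed.

Lemma sum_bernstein n p : \sum_(k < n.+1) bernstein n k p = 1.
Proof.
rewrite -(expr1n _ n) -[X in X ^+ n](subrK p) exprDn.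
by apply: eq_bigr => k _; rewrite /bernstein -mulr_natl; ring.
Qed.

Lemma bernstein_le1 n (k : 'I_n.+1) p : p \in `[0, 1] -> bernstein n k p <= 1.
Proof.
move=> p01; rewrite -(sum_bernstein n p) (bigD1 k) //= lerDl.
by apply: sumr_ge0 => i _; exact: bernstein_ge0.
Qed.

Lemma continuous_bernstein n k : continuous (bernstein n k).
Proof.
move=> p; apply: cvgM; first apply: cvgM.
- exact: cvg_cst.
- exact: exprn_continuous.
- have cont_1B : {for p, continuous (fun p : R => 1 - p)}.
    by apply: cvgB; [exact: cvg_cst | exact: cvg_id].
  exact: (continuous_comp cont_1B (@exprn_continuous R (n - k) (1 - p))).
Qed.

Definition bernstein_avg n (f : nat -> R -> R) p : R :=
  \sum_(k < n.+1) bernstein n k p * f k p.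

Lemma continuous_bernstein_avg n (f : nat -> R -> R) :
  (forall k, (k <= n)%N -> continuous (f k)) -> continuous (bernstein_avg n f).
Proof.
move=> f_cont; rewrite /bernstein_avg.
apply: (continuous_big add_continuous) => k _ p.
by apply: cvgM; [exact: continuous_bernstein | apply: f_cont; rewrite -ltnS].
Qed.

Lemma bernstein_avg_ge0 n (f : nat -> R -> R) p : p \in `[0, 1] ->
  (forall k, 0 <= f k p) -> 0 <= bernstein_avg n f p.
Proof.
by move=> p01 f_ge0; apply: sumr_ge0 => k _; rewrite mulr_ge0 ?bernstein_ge0.
Qed.

Lemma ler_bernstein_avg n (f g : nat -> R -> R) p : p \in `[0, 1] ->
    (forall k, (k <= n)%N -> f k p <= g k p) ->
  bernstein_avg n f p <= bernstein_avg n g p.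
Proof.
move=> p01 fg; apply: ler_sum => k _.
by rewrite ler_wpM2l ?bernstein_ge0 // fg // -ltnS.
Qed.

End bernstein.

Section Dfun.
Variables (R : realType) (n : nat).
Implicit Types (a b : nat -> R) (p q : R).

Lemma DfunE a : Dfun n a = bernstein_avg n (fun k p => `|p - a k|).
Proof. by []. Qed.

Lemma continuous_Dfun a : continuous (Dfun n a).
Proof.
rewrite DfunE; apply: continuous_bernstein_avg => k _ p.
by apply: cvg_norm; apply: cvgB; [exact: cvg_id | exact: cvg_cst].
Qed.

Lemma Dfun_ge0 a p : p \in `[0, 1] -> 0 <= Dfun n a p.
Proof. by move=> p01; rewrite DfunE bernstein_avg_ge0. Qed.

Lemma Dfun_l1_lipschitz a b p : p \in `[0, 1] ->
  Dfun n a p - Dfun n b p <= \sum_(k < n.+1) `|a k - b k|.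
Proof.
move=> p01; rewrite -sumrB; apply: ler_sum => k _; rewrite -mulrBr.
have dist_le : `|p - a k| - `|p - b k| <= `|a k - b k|.
  apply: le_trans (lerB_dist _ _) _.
  by rewrite (_ : p - a k - (p - b k) = b k - a k) 1?distrC //; ring.
apply: le_trans (ler_wpM2l (bernstein_ge0 _ _ p01) dist_le) _.
by rewrite ler_piMl ?bernstein_le1.
Qed.

Lemma worstD_attained a : exists2 p, p \in `[0, 1] &
  worstD n a = (Dfun n a p)%:E /\
  forall q, q \in `[0, 1] -> Dfun n a q <= Dfun n a p.
Proof.
have [p p01 p_max] := EVT_max ler01 (continuous_subspaceT (@continuous_Dfun a)).
exists p => //; split => //; apply: ereal_sup_attained; first by exists p.
by move=> _ [q q01 <-]; rewrite lee_fin; apply: p_max.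
Qed.

Lemma ex_argmin_worstD :
  exists2 a, adm_pt n a & forall b, adm_pt n b -> (worstD n a <= worstD n b)%E.
Proof.
pose F a := fine (worstD n a).
have F_lip a b : F a - F b <= \sum_(k < n.+1) `|a k - b k|.
  have [p p01 [Ea _]] := worstD_attained a.
  have [q _ [Eb b_max]] := worstD_attained b.
  rewrite /F Ea Eb /=; apply: le_trans (Dfun_l1_lipschitz a b p01).
  by rewrite lerD2l lerN2 b_max.
have [a [a01 a_min]] := l1_lipschitz_EVT_min F_lip.
exists a => // b b01; have := a_min b b01.
have [p _ [Ea _]] := worstD_attained a; have [q _ [Eb _]] := worstD_attained b.
by rewrite /F Ea Eb lee_fin.
Qed.

Lemma supnormD_worstD : supnormD n = worstD n :> ((nat -> R) -> \bar R).
Proof.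
apply: funext => a; congr ereal_sup; apply/seteqP.
by split=> _ [p p01 <-]; exists p => //; rewrite ger0_norm ?Dfun_ge0.
Qed.

End Dfun.

Section mean_dist.
Variable R : realType.
Implicit Types (P : probability R R) (p q : R).

Lemma integral_itv01 P (f : R -> \bar R) : inOmega P -> measurable_fun setT f ->
  (\int[P]_x f x = \int[P]_(x in `[0%R, 1%R]%classic) f x)%E.
Proof.
move=> P01 mf; have m01 : measurable (`[0%R, 1%R] : set R) by [].
rewrite [RHS]integral_mkcond; apply: ae_eq_integral => //.
  exact: (measurable_restrictT f m01).1 (measurable_funTS mf).
exists (~` `[0%R, 1%R]%classic); split; first exact: measurableC.
  by have := probability_setC P m01; rewrite P01 subee.
by move=> x /= + x01; apply; rewrite patchE mem_set.
Qed.

Lemma continuous_dist q : continuous (fun y : R => `|q - y|).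
Proof. by move=> y; apply: cvg_norm; apply: cvgB; [exact: cvg_cst | exact: cvg_id]. Qed.

Lemma measurable_dist q : measurable_fun setT (fun y : R => (`|q - y|)%:E).
Proof. by apply/measurable_EFinP; apply: continuous_measurable_fun; exact: continuous_dist. Qed.

Lemma integrable_dist P p : inOmega P ->
  P.-integrable setT (fun y => (`|p - y|)%:E).
Proof.
move=> P01; apply/integrableP; split; first exact: measurable_dist.
have mabs : measurable_fun setT (fun y : R => `|(`|p - y|)%:E|)%E.
  by apply: measurableT_comp => //; exact: measurable_dist.
rewrite integral_itv01 //.
apply: le_lt_trans (_ : _ <= \int[P]_(x in `[0%R, 1%R]%classic) (`|p| + 1)%:E)%E _.
  apply: ge0_le_integral => //; first exact: measurable_funTS.
  move=> y; rewrite /= normr_id lee_fin in_itv /= => /andP[y0 y1].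
  by apply: le_trans (ler_normB _ _) _; rewrite lerD2l ger0_norm.
by rewrite integral_cst //= P01 mule1 ltry.
Qed.

Definition mean_dist P p : R := fine (\int[P]_y (`|p - y|)%:E)%E.

Lemma mean_distE P p : inOmega P ->
  (\int[P]_y (`|p - y|)%:E)%E = (mean_dist P p)%:E.
Proof. by move=> P01; rewrite fineK // integrable_fin_num // integrable_dist. Qed.

Lemma mean_dist_ge0 P p : 0 <= mean_dist P p.
Proof. by apply: fine_ge0; apply: integral_ge0 => y _; rewrite lee_fin. Qed.

Lemma integral_affine_dist P (C c p : R) : inOmega P ->
  (\int[P]_y (C + c * `|p - y|)%:E)%E = (C + c * mean_dist P p)%:E.
Proof.
move=> P01; under eq_integral do rewrite EFinD EFinM.
rewrite integralD //.
- rewrite integral_cst // integralZl ?integrable_dist // mean_distE //.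
  by rewrite [X in (_ * X)%E](_ : _ = 1%E) ?mule1 //; exact: probability_setT.
- exact: finite_measure_integrable_cst.
- exact/integrableZl/integrable_dist.
Qed.

Lemma mean_dist_le P p q : inOmega P ->
  mean_dist P p <= mean_dist P q + `|p - q|.
Proof.
move=> P01; rewrite -lee_fin -mean_distE // addrC -[mean_dist P q]mul1r.
rewrite -integral_affine_dist //; apply: ge0_le_integral => //.
- exact: measurable_dist.
- apply/measurable_EFinP; apply: continuous_measurable_fun => y.
  by apply: cvgD; [exact: cvg_cst | apply: cvgM; [exact: cvg_cst | exact: continuous_dist]].
- move=> y _; rewrite lee_fin mul1r.
  by rewrite (_ : p - y = (p - q) + (q - y)) ?ler_normD //; ring.
Qed.

Lemma continuous_mean_dist P : inOmega P -> continuous (mean_dist P).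
Proof.
move=> P01; apply: lipschitz1_continuous => p q; rewrite ler_norml.
have := mean_dist_le p q P01; have := mean_dist_le q p P01.
by rewrite distrC; lra.
Qed.

Lemma mean_dist_meet P p q : inOmega P -> p - q <= mean_dist P p + mean_dist P q.
Proof.
move=> P01; apply: le_trans (ler_norm _) _.
rewrite -lee_fin EFinD -!mean_distE // -integralD ?integrable_dist //.
apply: le_trans (_ : _ <= \int[P]_y (cst (`|p - q|)%:E) y)%E _.
  by rewrite integral_cst // [X in (_ * X)%E](_ : _ = 1%E) ?mule1 //; exact: probability_setT.
under [leRHS]eq_integral do rewrite -EFinD.
apply: ge0_le_integral => //.
- by move=> y _; rewrite lee_fin.
- apply/measurable_EFinP; apply: continuous_measurable_fun => y.
  by apply: cvgD; exact: continuous_dist.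
- move=> y _; rewrite /= lee_fin.
  by rewrite (_ : p - q = (p - y) - (q - y)) ?ler_normB //; ring.
Qed.

Lemma mean_dist_center P : inOmega P ->
  exists2 m, m \in `[0, 1] & forall q, q \in `[0, 1] -> `|q - m| <= mean_dist P q.
Proof.
move=> P01; apply: pairwise_meeting_itv01 => [p _|p q _ _].
  exact: mean_dist_ge0.
exact: mean_dist_meet.
Qed.

Lemma inOmega_dirac (a : R) : a \in `[0, 1] -> inOmega (\d_a : probability R R).
Proof.
move=> a01; rewrite /inOmega.
by transitivity (\d_a `[0%R, 1%R]%classic : \bar R); rewrite // diracE mem_set.
Qed.

Lemma mean_dist_dirac (a p : R) : mean_dist (\d_a : probability R R) p = `|p - a|.
Proof.
rewrite /mean_dist integral_dirac //; last exact: measurable_dist.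
by rewrite [X in (X * _)%E](_ : _ = 1%E) ?mul1e //; exact: diracT.
Qed.

End mean_dist.

Section Efun.
Variables (R : realType) (n : nat) (s : nat -> probability R R).
Hypothesis s_adm : adm_meas n s.

Lemma iterint_Dfun p k : (k <= n.+1)%N -> forall x,
  iterint s k (fun x => (Dfun n x p)%:E) x =
  (bernstein_avg n
     (fun j p => if (j < k)%N then mean_dist (s j) p else `|p - x j|) p)%:E.
Proof.
elim: k => [|k IH] kn x; first by congr EFin; apply: eq_bigr.
pose k' : 'I_n.+1 := Ordinal kn.
set C := \sum_(j < n.+1 | j != k')
  bernstein n j p * (if (j < k)%N then mean_dist (s j) p else `|p - x j|).
transitivity (\int[s k]_y (C + bernstein n k p * `|p - y|)%:E)%E.
  rewrite [LHS]/=; apply: eq_integral => y _; rewrite IH 1?ltnW //; congr EFin.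
  rewrite /bernstein_avg (bigD1 k') //= ltnn /upd eqxx addrC; congr (_ + _).
  by apply: eq_bigr => j jk; rewrite (negbTE jk : (j == k :> nat) = false).
rewrite integral_affine_dist; last exact: s_adm.
congr EFin.
rewrite /bernstein_avg (bigD1 k') //= ltnSn addrC; congr (_ + _).
by apply: eq_bigr => j jk; rewrite ltnS [(j <= k)%N]leq_eqVlt (negbTE jk : (j == k :> nat) = false).
Qed.

Definition Eprofile p := bernstein_avg n (fun k => mean_dist (s k)) p.

Lemma EfunE mu : Efun n s mu = (\int[mu]_p (Eprofile p)%:E)%E.
Proof.
apply: eq_integral => p _; rewrite iterint_Dfun //; congr EFin.
by apply: eq_bigr => j _; rewrite ltn_ord.
Qed.

Lemma Eprofile_ge0 p : p \in `[0, 1] -> 0 <= Eprofile p.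
Proof. by move=> p01; apply: bernstein_avg_ge0 => // k; exact: mean_dist_ge0. Qed.

Lemma continuous_Eprofile : continuous Eprofile.
Proof.
by apply: continuous_bernstein_avg => k kn; exact: continuous_mean_dist (s_adm kn).
Qed.

Lemma measurable_Eprofile : measurable_fun setT (fun p => (Eprofile p)%:E).
Proof.
by apply/measurable_EFinP; apply: continuous_measurable_fun; exact: continuous_Eprofile.
Qed.

Lemma Efun_dirac p : Efun n s \d_p = (Eprofile p)%:E.
Proof.
rewrite EfunE integral_dirac //; last exact: measurable_Eprofile.
by rewrite [X in (X * _)%E](_ : _ = 1%E) ?mul1e //; exact: diracT.
Qed.

Lemma Eprofile_le_worstE q : q \in `[0, 1] -> ((Eprofile q)%:E <= worstE n s)%E.
Proof.
move=> q01; rewrite -Efun_dirac; apply: ereal_sup_ubound.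
by exists \d_q => //; exact: inOmega_dirac.
Qed.

Lemma worstE_argmax p : p \in `[0, 1] ->
    (forall q, q \in `[0, 1] -> Eprofile q <= Eprofile p) ->
  worstE n s = (Eprofile p)%:E.
Proof.
move=> p01 p_max; apply: ereal_sup_attained.
  by exists \d_p; [exact: inOmega_dirac | exact: Efun_dirac].
move=> _ [mu mu01 <-]; rewrite EfunE integral_itv01 //; last exact: measurable_Eprofile.
apply: le_trans (_ : _ <= \int[mu]_(x in `[0%R, 1%R]%classic) (Eprofile p)%:E)%E _.
  apply: ge0_le_integral => //; last exact: measurable_funTS measurable_Eprofile.
  by move=> x x01; rewrite lee_fin Eprofile_ge0.
by rewrite integral_cst //= mu01 mule1.

Qed.

Lemma worstE_attained : exists2 mu, inOmega mu & Efun n s mu = worstE n s.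
Proof.
have [p p01 p_max] := EVT_max ler01 (continuous_subspaceT continuous_Eprofile).
exists \d_p; first exact: inOmega_dirac.
by rewrite Efun_dirac (worstE_argmax p01 p_max).
Qed.

Lemma Dfun_center_le_Eprofile :
  exists2 m, adm_pt n m & forall q, q \in `[0, 1] -> Dfun n m q <= Eprofile q.
Proof.
have /choice[m m_center] k : exists m : R, (k <= n)%N ->
    m \in `[0, 1] /\ forall q, q \in `[0, 1] -> `|q - m| <= mean_dist (s k) q.
  have [kn|_] := boolP (k <= n)%N; last by exists 0.
  by have [m m01 m_le] := mean_dist_center (s_adm kn); exists m.
exists m => [k kn|q q01]; first by case: (m_center k kn).
rewrite DfunE; apply: ler_bernstein_avg => // k kn.
by case: (m_center k kn) => _; apply.
Qed.

End Efun.

Lemma worstD_le_worstE (R : realType) n (s : nat -> probability R R) :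
  adm_meas n s -> exists2 m, adm_pt n m & (worstD n m <= worstE n s)%E.
Proof.
move=> s_adm; have [m m_adm m_le] := Dfun_center_le_Eprofile s_adm.
exists m => //; have [q q01 [-> _]] := worstD_attained n m.
by apply: le_trans (Eprofile_le_worstE s_adm q01); rewrite lee_fin m_le.
Qed.

Lemma adm_meas_dirac (R : realType) n (a : nat -> R) :
  adm_pt n a -> adm_meas n (fun k => \d_(a k)).
Proof. by move=> a_adm k kn; apply: inOmega_dirac; exact: a_adm. Qed.

Lemma worstE_dirac (R : realType) n (a : nat -> R) :
  adm_pt n a -> worstE n (fun k => \d_(a k)) = worstD n a.
Proof.
move=> a_adm; have s_adm := adm_meas_dirac a_adm.
have EprofileE : Eprofile n (fun k => \d_(a k)) =1 Dfun n a.
  by move=> p; apply: eq_bigr => k _; rewrite mean_dist_dirac.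
have [p p01 [-> p_max]] := worstD_attained n a.
rewrite (worstE_argmax s_adm p01) ?EprofileE // => q q01.
by rewrite !EprofileE p_max.
Qed.

Unset Implicit Arguments.

Theorem theorem4p2 (R : realType) (n : nat) (hn : (1 <= n)%N) :
  (* the inner maxima are attained *)
  (forall s : nat -> probability R R, adm_meas n s ->
     exists2 mu, inOmega mu & Efun n s mu = worstE n s) /\
  (forall a : nat -> R, adm_pt n a ->
     exists2 p, p \in `[0%R, 1%R] & (Dfun n a p)%:E = worstD n a) /\
  (* the outer minima are attained *)
  (exists2 s, adm_meas n s &
     worstE n s = ereal_inf [set worstE n s' | s' in @adm_meas R n]) /\
  (exists2 a, adm_pt n a &
     worstD n a = ereal_inf [set worstD n a' | a' in @adm_pt R n]) /\
  (exists2 a, adm_pt n a &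
     supnormD n a = ereal_inf [set supnormD n a' | a' in @adm_pt R n]) /\
  (* the three min-max values coincide *)
  ereal_inf [set worstE n s' | s' in @adm_meas R n]
    = ereal_inf [set worstD n a' | a' in @adm_pt R n] /\
  ereal_inf [set worstD n a' | a' in @adm_pt R n]
    = ereal_inf [set supnormD n a' | a' in @adm_pt R n].
Proof.
have [a a_adm a_min] := @ex_argmin_worstD R n.
have infD : ereal_inf [set worstD n a' | a' in @adm_pt R n] = worstD n a.
  by apply: ereal_inf_attained; [exists a | move=> _ [b b_adm <-]; exact: a_min].
have infE : ereal_inf [set worstE n s' | s' in @adm_meas R n] = worstD n a.
  apply: ereal_inf_attained.
    by exists (fun k => \d_(a k)); [exact: adm_meas_dirac | exact: worstE_dirac].
  move=> _ [s s_adm <-]; have [m m_adm m_le] := worstD_le_worstE s_adm.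
  exact: le_trans (a_min m m_adm) m_le.
rewrite supnormD_worstD infD infE; split; first exact: worstE_attained.
split; first by move=> b _; have [p p01 [-> _]] := worstD_attained n b; exists p.
split; first by exists (fun k => \d_(a k)); [exact: adm_meas_dirac | exact: worstE_dirac].
by split; [exists a | split; [exists a | ]].
Qed.
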